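(* For every positive integer $d$, there exists a finite special $2$-group $G$ such that the commuting graph $\Gamma(G)$ of $G$ has diameter greater than $d$.
   Context: For a group $G$, the commuting graph $\Gamma(G)$ is the graph whose vertices are the non-central elements of $G$, two distinct vertices being adjacent if and only if they commute in $G$. A finite $p$-group $G$ is special if $G$ is elementary abelian or $Z(G)=[G,G]=\Phi(G)$ (the Frattini subgroup), this common subgroup being elementary abelian. *)

From mathcomp Require Import all_boot all_fingroup all_solvable.
Set Implicit Arguments. Unset Strict Implicit. Unset Printing Implicit Defensive.
Local Open Scope group_scope.

Definition special_pgroup (gT : finGroupType) (p : nat) (G : {group gT}) : Prop :=
  p.-group G /\
  (p.-abelem G \/
   ('Z(G) = G^`(1) /\ G^`(1) = 'Phi(G) /\ p.-abelem 'Z(G))).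

Definition cg_vertex (gT : finGroupType) (G : {group gT}) (x : gT) : bool :=
  x \in G :\: 'Z(G).

Definition cg_adj (gT : finGroupType) (G : {group gT}) : rel gT :=
  fun x y => [&& cg_vertex G x, cg_vertex G y, x != y & x * y == y * x].

Definition cg_dist_le (gT : finGroupType) (G : {group gT}) (x y : gT) (n : nat) : Prop :=
  exists p : seq gT, [&& path (cg_adj G) x p, last x p == y & size p <= n].

Definition cg_connected (gT : finGroupType) (G : {group gT}) : Prop :=
  forall x y, cg_vertex G x -> cg_vertex G y -> exists n, cg_dist_le G x y n.

Definition cg_diam_gt (gT : finGroupType) (G : {group gT}) (d : nat) : Prop :=
  exists x y, [/\ cg_vertex G x, cg_vertex G y & ~ cg_dist_le G x y d].

From HB Require Import structures.
From mathcomp Require Import all_boot all_fingroup all_solvable.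
From mathcomp Require Import ssralg poly polydiv qpoly zmodp finalg finfield.
From mathcomp Require Import zify ring.
Set Implicit Arguments. Unset Strict Implicit. Unset Printing Implicit Defensive.
Import GRing.Theory Pdiv.Field.
Local Open Scope ring_scope.

(* Let V be the polynomials of degree at most n + 1 over a finite field F and
   Z those of degree at most 2n + 1, and make V x V x Z a group by
     (a, b, z) (a', b', z') = (a + a', b + b', z + z' + (a b') div X).
   The commutator of (a, b, _) and (a', b', _) is the central element
   (a b' - a' b) div X, so two elements commute iff a b' - a' b is constant,
   and G' = Z(G) = Phi(G) = 0 x 0 x Z: in characteristic p, G is a special
   p-group whose non-central elements are the (a, b) <> 0.
   If a b' - a' b is constant, Euclid's algorithm performs the same first
   division on (a, b) and on (a', b'), and the remainder pairs again have a
   constant cross product; hence the number of division steps changes by at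
   most one along an edge of the commuting graph. It is 0 at (1, 0) and n + 1
   at two consecutive Fibonacci polynomials, which are thus at distance > n.
   Running the extended Euclidean algorithm walks any vertex down to (1, 0),
   so the graph is connected. *)

Section EuclidSteps.
Variable F : fieldType.
Implicit Types a b c d : {poly F}.

(* The fuel k suffices as soon as size b <= k. *)
Fixpoint euclid_steps k a b : nat :=
  if k is k'.+1 then (if b == 0 then 0 else (euclid_steps k' b (a %% b)).+1)
  else 0.

Lemma euclid_steps_size_le1 k a b : size b <= 1 -> euclid_steps k a b <= 1.
Proof.
case: k => [|k] //= /size1_polyC ->; case: eqP => // /eqP b0.
rewrite modpC; last by rewrite -polyC_eq0.
by case: k => //= k; rewrite eqxx.
Qed.

Lemma divp_small_cross a b c d : 1 < size b -> d != 0 ->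
  size (a * d - b * c) <= 1 -> a %/ b = c %/ d.
Proof.
move=> sb2 d0 cross1.
have b0 : b != 0 by rewrite -size_poly_gt0; lia.
have sd : 0 < size d by rewrite size_poly_gt0.
have sr : size (a %% b) < size b by rewrite ltn_modp.
have sr' : size (c %% d) < size d by rewrite ltn_modp.
have key : b * (c %% d) - a %% b * d = (a %/ b - c %/ d) * b * d - (a * d - b * c).
  move: (divp_eq a b) (divp_eq c d).
  by move: (a %/ b) (a %% b) (c %/ d) (c %% d) => q r q' r' -> ->; ring.
apply/eqP; rewrite -subr_eq0; apply: contraLR cross1 => dq; rewrite -ltnNge.
have small_rem : size (b * (c %% d) - a %% b * d) < size ((a %/ b - c %/ d) * b * d).
  rewrite !size_mul ?mulf_neq0 //; move: dq; rewrite -size_poly_gt0 => dq.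
  apply: leq_ltn_trans (size_polyD _ _) _; rewrite size_polyN gtn_max.
  rewrite !(leq_ltn_trans (size_polyMleq _ _)) //; move: sr sr' dq sb2 sd;
    move: (size (a %/ b - c %/ d)) (size (a %% b)) (size (c %% d));
    by move: (size b) (size d); lia.
rewrite key ltnNge in small_rem; rewrite ltnNge; apply: contra small_rem => cross_le1.
rewrite size_polyDl ?leqnn // size_polyN (leq_ltn_trans cross_le1) //.
rewrite !size_mul ?mulf_neq0 //; have := size_poly_gt0 (a %/ b - c %/ d).
by rewrite dq; move: sb2 sd; move: (size (a %/ b - c %/ d)) (size b) (size d); lia.
Qed.

Lemma euclid_steps_cross k a b c d : size b <= k -> size d <= k ->
  size (a * d - b * c) <= 1 -> (c != 0) || (d != 0) ->
  euclid_steps k a b <= (euclid_steps k c d).+1.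
Proof.
elim: k a b c d => [|k IHk] a b c d // sb sd cross1 cd0.
have [sb1|sb2] := leqP (size b) 1.
  exact: leq_trans (euclid_steps_size_le1 _ _ sb1) _.
have b0 : b != 0 by rewrite -size_poly_gt0 ltnW.
have d0 : d != 0.
  apply: contraTneq cross1 => d0; rewrite -ltnNge d0 mulr0 sub0r size_polyN.
  rewrite d0 eqxx orbF in cd0; rewrite size_mul //; have := size_poly_gt0 c.
  by rewrite cd0; move: sb2; move: (size b) (size c); lia.
have eq_quot := divp_small_cross sb2 d0 cross1.
rewrite /= (negbTE b0) (negbTE d0) ltnS; apply: IHk; rewrite ?d0 ?orbT //.
- by rewrite -ltnS (leq_trans _ sb) // ltn_modp.
- by rewrite -ltnS (leq_trans _ sd) // ltn_modp.
have -> : b * (c %% d) - a %% b * d = - (a * d - b * c).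
  move: (divp_eq a b) (divp_eq c d); rewrite eq_quot.
  by move: (c %/ d) (a %% b) (c %% d) => q r r' -> ->; ring.
by rewrite size_polyN.
Qed.

Fixpoint fibp n : {poly F} :=
  match n with 0 => 0 | 1 => 1 | (n'.+1 as m).+1 => 'X * fibp m + fibp n' end.
#[global] Arguments fibp : simpl never.

Lemma fibpSS n : fibp n.+2 = 'X * fibp n.+1 + fibp n. Proof. by []. Qed.

Lemma size_fibp n : size (fibp n) = n.
Proof.
suff /andP[/eqP-> //] : (size (fibp n) == n) && (size (fibp n.+1) == n.+1).
elim: n => [|n /andP[/eqP sn /eqP sn1]]; first by rewrite size_poly0 size_poly1.
by rewrite sn1 fibpSS mulrC size_polyDl size_mulX -?size_poly_eq0 ?sn1 ?sn ?eqxx.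
Qed.

Lemma euclid_steps_fibp k n : n <= k -> euclid_steps k (fibp n.+1) (fibp n) = n.
Proof.
elim: n k => [|n IHn] [|k] lenk //=; first by rewrite eqxx.
rewrite -size_poly_eq0 size_fibp /= fibpSS modpD modp_mull add0r modp_small ?IHn //.
by rewrite !size_fibp.
Qed.

Lemma coprimep_cross_eq1 m a b : coprimep a b -> size a <= m -> size b <= m ->
  b != 0 -> exists c d, [/\ size c <= m, size d < size b & a * d - c * b = 1].
Proof.
move=> /Bezout_eq1_coprimepP[[u v] /= bezout] sa sb b0.
set d := u %% b; set c := - (v + u %/ b * a).
have cross1 : a * d - c * b = 1.
  rewrite -bezout /c /d; move: (divp_eq u b).
  by move: (u %/ b) (u %% b) => q r ->; ring.
have sd : size d < size b by rewrite ltn_modp.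
exists c, d; split=> //; have [-> | c0] := eqVneq c 0; first by rewrite size_poly0.
have : size (c * b) <= maxn (size (a * d)) 1.
  have -> : c * b = a * d - 1 by rewrite -cross1; ring.
  by rewrite (leq_trans (size_polyD _ _)) // size_polyN size_poly1.
have sb0 : 0 < size b by rewrite size_poly_gt0.
have := size_polyMleq a d; rewrite (size_mul c0 b0).
move: sa sb sd sb0; move: (size a) (size b) (size c) (size d) (size (a * d)); lia.
Qed.

Lemma small_cross_descent m a b : size a <= m -> size b <= m -> b != 0 ->
  exists c d, [/\ size c <= m, size d < size b, (c != 0) || (d != 0)
                & size (a * d - c * b) <= 1].
Proof.
move=> sa sb b0; have [coprime_ab | ] := boolP (coprimep a b).
  have [c [d [sc sd cross1]]] := coprimep_cross_eq1 coprime_ab sa sb b0.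
  exists c, d; rewrite cross1 size_poly1; split=> //.
  rewrite -negb_and; apply: contra_eqN cross1 => /andP[/eqP-> /eqP->].
  by rewrite mulr0 mul0r subr0 eq_sym oner_eq0.
rewrite /coprimep; set g := gcdp a b => sg_neq1.
have g0 : g != 0 by rewrite gcdp_eq0 negb_and b0 orbT.
have sg : 1 < size g by rewrite ltn_neqAle eq_sym sg_neq1 size_poly_gt0.
exists (a %/ g), (b %/ g); split.
- by rewrite size_divp // (leq_trans (leq_subr _ _)).
- rewrite size_divp //; have := size_poly_gt0 b; rewrite b0.
  by move: sg; move: (size b) (size g); lia.
- apply/orP; right; apply: contraNneq b0 => bg0.
  by rewrite -(divpK (dvdp_gcdr a b)) -/g bg0 mul0r.
- move: (divpK (dvdp_gcdl a b)) (divpK (dvdp_gcdr a b)); rewrite -/g.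
  move: (a %/ g) (b %/ g) => c d <- <-.
  by rewrite (_ : _ - _ = 0) ?size_poly0 //; ring.
Qed.
End EuclidSteps.

Lemma cg_adj_sym (gT : finGroupType) (G : {group gT}) : symmetric (cg_adj G).
Proof.
move=> x y; rewrite /cg_adj.
by apply/and4P/and4P => -[vx vy xy /eqP cxy]; split; rewrite 1?eq_sym // cxy.
Qed.

Section HeisenbergLaw.
Variables (F : finFieldType) (n : nat).
Local Notation V := {poly_n.+2 F}.
Local Notation Z := {poly_(n.+1).*2 F}.
Local Notation T := (V * V * Z)%type.
Implicit Types (u w : V * V) (x y : T).

Definition heis_twist (u w : V * V) : {poly F} := val u.1 * val w.2 %/ 'X.

Lemma size_heis_twist u w : size (heis_twist u w) <= (n.+1).*2.
Proof.
rewrite size_divp ?polyX_eq0 // size_polyX leq_subLR.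
apply: leq_trans (size_polyMleq _ _) _.
by move: (size_npoly u.1) (size_npoly w.2); move: (size (val u.1)) (size (val w.2)); lia.
Qed.

Lemma heis_twistDl u u' w : heis_twist (u + u') w = heis_twist u w + heis_twist u' w.
Proof. by rewrite /heis_twist /= mulrDl divpD. Qed.

Lemma heis_twistDr u w w' : heis_twist u (w + w') = heis_twist u w + heis_twist u w'.
Proof. by rewrite /heis_twist /= mulrDr divpD. Qed.

Lemma heis_twistNl u w : heis_twist (- u) w = - heis_twist u w.
Proof. by rewrite /heis_twist /= mulNr divpN. Qed.

Lemma heis_twist0l w : heis_twist 0 w = 0.
Proof. by rewrite /heis_twist /= mul0r div0p. Qed.

Lemma heis_twist0r u : heis_twist u 0 = 0.
Proof. by rewrite /heis_twist /= mulr0 div0p. Qed.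

Definition heis_mul (x y : T) : T :=
  (x.1 + y.1, npolyp _ (val x.2 + val y.2 + heis_twist x.1 y.1)).
Definition heis_one : T := (0, 0).
Definition heis_inv (x : T) : T := (- x.1, npolyp _ (- val x.2 + heis_twist x.1 x.1)).

Lemma heis_mul_snd x y : val (heis_mul x y).2 = val x.2 + val y.2 + heis_twist x.1 y.1.
Proof.
rewrite /= npolypK // (leq_trans (size_polyD _ _)) // geq_max size_heis_twist.
by rewrite (leq_trans (size_polyD _ _)) // geq_max !size_npoly.
Qed.

Lemma heis_inv_snd x : val (heis_inv x).2 = - val x.2 + heis_twist x.1 x.1.
Proof.
rewrite /= npolypK // (leq_trans (size_polyD _ _)) // geq_max size_heis_twist.
by rewrite size_polyN size_npoly.
Qed.

Lemma heis_eq (x y : T) : x.1 = y.1 -> val x.2 = val y.2 -> x = y.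
Proof. by case: x y => [u z] [w t] /= -> /val_inj->. Qed.

Lemma heis_mulA : associative heis_mul.
Proof.
move=> x y z; apply: heis_eq; first by rewrite /= addrA.
by rewrite !heis_mul_snd /= heis_twistDl heis_twistDr; ring.
Qed.

Lemma heis_mul1 : left_id heis_one heis_mul.
Proof.
by move=> x; apply: heis_eq; rewrite ?heis_mul_snd /= ?heis_twist0l ?add0r ?addr0.
Qed.

Lemma heis_mulV : left_inverse heis_one heis_inv heis_mul.
Proof.
move=> x; apply: heis_eq; first by rewrite /= addNr.
by rewrite heis_mul_snd heis_inv_snd /= heis_twistNl; ring.
Qed.

End HeisenbergLaw.

Definition poly_heis (F : finFieldType) (n : nat) :=
  ({poly_n.+2 F} * {poly_n.+2 F} * {poly_(n.+1).*2 F})%type.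
HB.instance Definition _ F n := Finite.on (poly_heis F n).
HB.instance Definition _ F n :=
  Finite_isGroup.Build (poly_heis F n) (@heis_mulA F n) (@heis_mul1 F n) (@heis_mulV F n).

Section HeisenbergGroup.
Variables (F : finFieldType) (n : nat).
Local Notation V := {poly_n.+2 F}.
Local Notation G := (poly_heis F n).
Implicit Types x y : G.

Lemma heis_mulg_fst x y : ((x * y)%g).1 = x.1 + y.1. Proof. by []. Qed.

Lemma heis_mulg_snd x y :
  val ((x * y)%g).2 = val x.2 + val y.2 + heis_twist x.1 y.1.
Proof. exact: heis_mul_snd. Qed.

Definition heis_cross (u w : V * V) : {poly F} := val u.1 * val w.2 - val w.1 * val u.2.

Lemma heis_crossE a b c d : heis_cross (a, b) (c, d) = val a * val d - val c * val b.
Proof. by []. Qed.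

Lemma heis_twistB u w : heis_twist u w - heis_twist w u = heis_cross u w %/ 'X.
Proof. by rewrite /heis_twist /heis_cross divpD divpN mulrC. Qed.

Lemma heis_commuteE x y : (x * y == y * x)%g = (size (heis_cross x.1 y.1) <= 1).
Proof.
have -> : (size (heis_cross x.1 y.1) <= 1) = (heis_cross x.1 y.1 %/ 'X == 0).
  by rewrite -size_poly_eq0 size_divp ?polyX_eq0 // size_polyX subn_eq0.
rewrite -heis_twistB subr_eq0; apply/eqP/eqP => [/(congr1 (fun z : G => val z.2))|eq_tw].
  by rewrite !heis_mulg_snd [val y.2 + _]addrC => /addrI.
apply: heis_eq; first by rewrite !heis_mulg_fst addrC.
by rewrite !heis_mulg_snd eq_tw [val y.2 + _]addrC.
Qed.

Definition heis_central (z : {poly F}) : G := (0, npolyp _ z).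

Lemma heis_commgE x y : [~ x, y]%g = heis_central (heis_cross x.1 y.1 %/ 'X).
Proof.
have size_z : size (heis_cross x.1 y.1 %/ 'X) <= (n.+1).*2.
  rewrite -heis_twistB (leq_trans (size_polyD _ _)) //.
  by rewrite geq_max size_polyN !size_heis_twist.
have xy : (x * y = y * x * heis_central (heis_cross x.1 y.1 %/ 'X))%g.
  apply: heis_eq; first by rewrite !heis_mulg_fst addr0 addrC.
  rewrite !heis_mulg_snd /= npolypK // heis_twist0r -heis_twistB.
  by rewrite [val y.2 + _]addrC; ring.
by rewrite commgEl conjgE !mulgA -invMg -mulgA xy mulKg.
Qed.

Lemma heis_centerE x : (x \in 'Z([set: G]))%g = (x.1 == 0).
Proof.
pose vX : V := npolyp _ 'X.
have val_vX : val vX = 'X by rewrite /= npolypK // size_polyX.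
have val0 : val (0 : V) = 0 by [].
apply/centerP/eqP => [[_ cent] | x0].
  have eq0_of_mulX_small (p : V) : size (val p * 'X) <= 1 -> p = 0.
    move=> small; apply: val_inj; rewrite val0; apply/eqP; apply: contraTT small => p0.
    by rewrite size_mulX // -ltnNge ltnS size_poly_gt0.
  case: x cent => [[a b] z] cent.
  have /eqP := cent ((vX, 0), 0) (in_setT _).
  rewrite heis_commuteE heis_crossE val0 val_vX mulr0 sub0r size_polyN mulrC => /eq0_of_mulX_small->.
  have /eqP := cent ((0, vX), 0) (in_setT _).
  by rewrite heis_commuteE heis_crossE val0 val_vX mul0r subr0 => /eq0_of_mulX_small->.
split=> [|y _]; first exact: in_setT.
by apply/eqP; rewrite heis_commuteE /heis_cross x0 val0 mul0r mulr0 subr0 size_poly0.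
Qed.

Lemma heis_central_val x : x.1 = 0 -> x = heis_central (val x.2).
Proof. by move=> x0; apply: heis_eq; rewrite //= npolypK ?size_npoly. Qed.

(* [~ (1, X^(n+1)), (c, d)] has cross product d - X^(n+1) c, which is X z
   when c and d come from the division of X z by X^(n+1). *)
Lemma heis_central_commg (z : {poly F}) : size z <= (n.+1).*2 ->
  exists x y : G, [~ x, y]%g = heis_central z.
Proof.
move=> sz; set P := 'X * z; set Xn : {poly F} := 'X^(n.+1).
have Xn0 : Xn != 0 by rewrite monic_neq0 ?monicXn.
pose u : V := npolyp _ 1; pose w : V := npolyp _ Xn.
pose c : V := npolyp _ (- (P %/ Xn)); pose d : V := npolyp _ (P %% Xn).
have sP : size P <= n.+1 + n.+2.
  rewrite /P mulrC; have [-> | z0] := eqVneq z 0; first by rewrite mul0r size_poly0.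
  by rewrite size_mulX //; move: sz; rewrite -addnn; lia.
have val_u : val u = 1 by rewrite /= npolypK ?size_poly1.
have val_w : val w = Xn by rewrite /= npolypK ?size_polyXn.
have val_c : val c = - (P %/ Xn).
  rewrite /= npolypK // size_polyN size_divp // size_polyXn /=; move: sP; move: (size P); lia.
have val_d : val d = P %% Xn.
  by rewrite /= npolypK // ltnW // -(size_polyXn F n.+1) ltn_modp.
exists ((u, w), 0), ((c, d), 0); rewrite heis_commgE heis_crossE val_u val_w val_c val_d.
by rewrite mul1r mulNr opprK addrC -divp_eq mulKp ?polyX_eq0.
Qed.

Lemma heis_der1 : ([set: G]^`(1) = 'Z([set: G]))%g.
Proof.
apply/eqP; rewrite eqEsubset; apply/andP; split.
  rewrite derg1 gen_subG; apply/subsetP => _ /imset2P[x y _ _ ->].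
  by rewrite heis_centerE heis_commgE.
apply/subsetP => x; rewrite heis_centerE => /eqP/heis_central_val->.
have [y [t <-]] := heis_central_commg (size_npoly x.2).
by rewrite mem_commg ?in_setT.
Qed.

Section PrimeCharacteristic.
Variable p : nat.
Hypothesis pcharFp : p \in [pchar F].

Lemma heis_pgroup : (p.-group [set: G])%g.
Proof.
have := pprimeChar_pgroup pcharFp; rewrite /pgroup !cardsT => pF.
by rewrite !card_prod !card_npoly -!expnD pnatX pF.
Qed.

Lemma heis_expg_fst x k : ((x ^+ k)%g).1 = x.1 *+ k.
Proof. by elim: k => [|k IHk]; rewrite ?expgS ?heis_mulg_fst ?IHk ?mulrS. Qed.

Lemma heis_expg_central x k : x.1 = 0 -> val ((x ^+ k)%g).2 = val x.2 *+ k.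
Proof.
move=> x0; elim: k => [|k IHk]; first by [].
by rewrite expgS heis_mulg_snd IHk x0 heis_twist0l addr0 mulrS.
Qed.

Lemma heis_expg_pchar x : ((x ^+ p)%g).1 = 0.
Proof. by rewrite heis_expg_fst -scaler_nat (pcharf0 pcharFp) scale0r. Qed.

Lemma heis_Phi : ('Phi([set: G]) = 'Z([set: G]))%g.
Proof.
rewrite (Phi_joing heis_pgroup) heis_der1; apply/eqP; rewrite eqEsubset joing_subl andbT.
rewrite join_subG subxx /= (MhoE 1 heis_pgroup) gen_subG expn1.
by apply/subsetP => _ /imsetP[x _ ->]; rewrite heis_centerE heis_expg_pchar.
Qed.

Lemma heis_center_abelem : (p.-abelem 'Z([set: G]))%g.
Proof.
apply/abelemP; first exact: pcharf_prime pcharFp.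
split=> [|x]; first exact: center_abelian.
rewrite heis_centerE => /eqP x0; apply: heis_eq; first by rewrite heis_expg_pchar.
by rewrite heis_expg_central // -scaler_nat (pcharf0 pcharFp) scale0r.
Qed.

Lemma heis_special : special_pgroup p [set: G]%G.
Proof.
split; first exact: heis_pgroup.
by right; rewrite heis_der1 heis_Phi heis_center_abelem.
Qed.

End PrimeCharacteristic.

Lemma heis_vertexE x : cg_vertex [set: G]%G x = (x.1 != 0).
Proof. by rewrite /cg_vertex in_setD heis_centerE in_setT andbT. Qed.

Lemma npoly_pair_neq0 (u : V * V) : (u != 0) = (val u.1 != 0) || (val u.2 != 0).
Proof. by case: u => a b; rewrite -negb_and. Qed.

Definition heis_euclid x : nat := euclid_steps n.+2 (val x.1.1) (val x.1.2).

Lemma heis_euclid_adj x y :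
  cg_adj [set: G]%G x y -> heis_euclid y <= (heis_euclid x).+1.
Proof.
case/and4P; rewrite !heis_vertexE npoly_pair_neq0 => vx _ _; rewrite heis_commuteE => cross1.
apply: euclid_steps_cross; rewrite ?size_npoly //.
by rewrite -size_polyN (_ : - _ = heis_cross x.1 y.1) // /heis_cross; ring.
Qed.

Lemma heis_euclid_path x s : path (cg_adj [set: G]%G) x s ->
  heis_euclid (last x s) <= heis_euclid x + size s.
Proof.
elim: s x => [|y s IHs] x /=; first by rewrite addn0.
case/andP => /heis_euclid_adj xy /IHs walk; apply: leq_trans walk _.
by rewrite addnS -addSn leq_add2r.
Qed.

Definition heis_base : G := ((npolyp _ 1, 0), 0).

Lemma val_heis_base : val heis_base.1.1 = 1.
Proof. by rewrite /= npolypK ?size_poly1. Qed.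

Lemma heis_base_vertex : cg_vertex [set: G]%G heis_base.
Proof. by rewrite heis_vertexE npoly_pair_neq0 val_heis_base oner_neq0. Qed.

Lemma heis_connect_base x :
  cg_vertex [set: G]%G x -> connect (cg_adj [set: G]%G) x heis_base.
Proof.
have [k] := ubnP (size (val x.1.2)); elim: k x => // k IHk x sk vx.
have [b0 | b0] := eqVneq (val x.1.2) 0.
  have [-> | x_neq] := eqVneq x heis_base; first exact: connect0.
  apply: connect1; rewrite /cg_adj vx heis_base_vertex x_neq heis_commuteE.
  by rewrite /heis_cross val_heis_base b0 mulr0 mul1r subr0 size_poly0.
have [c [d [sc sd cd0 cross1]]] := small_cross_descent (size_npoly x.1.1) (size_npoly x.1.2) b0.
have sd' : size d <= n.+2 by rewrite ltnW // (leq_trans sd) ?size_npoly.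
pose y : G := ((npolyp _ c, npolyp _ d), 0).
have [val_c val_d] : val y.1.1 = c /\ val y.1.2 = d by rewrite /= !npolypK.
have vy : cg_vertex [set: G]%G y by rewrite heis_vertexE npoly_pair_neq0 val_c val_d.
apply: connect_trans (IHk y _ vy); last by rewrite val_d (leq_trans sd).
apply: connect1; rewrite /cg_adj vx vy heis_commuteE /heis_cross val_c val_d cross1 andbT.
by apply: contraTneq sd => ->; rewrite val_d ltnn.
Qed.

Lemma heis_cg_connected : cg_connected [set: G]%G.
Proof.
move=> x y vx vy; have : connect (cg_adj [set: G]%G) x y.
  apply: connect_trans (heis_connect_base vx) _.
  by rewrite (sym_connect_sym (@cg_adj_sym _ _)) heis_connect_base.
by case/connectP => s walk ->; exists (size s), s; rewrite walk eqxx leqnn.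
Qed.

Lemma heis_cg_diam_gt : cg_diam_gt [set: G]%G n.
Proof.
pose fib : G := ((npolyp _ (fibp F n.+2), npolyp _ (fibp F n.+1)), 0).
have val_fib : val fib.1.1 = fibp F n.+2 /\ val fib.1.2 = fibp F n.+1.
  by split; rewrite /= npolypK ?size_fibp ?leqnSn.
exists heis_base, fib; split; first exact: heis_base_vertex.
  by rewrite heis_vertexE npoly_pair_neq0 val_fib.1 -size_poly_eq0 size_fibp.
case=> s /and3P[walk /eqP last_s size_s]; have := heis_euclid_path walk.
rewrite last_s /heis_euclid val_fib.1 val_fib.2 euclid_steps_fibp //= eqxx.
by rewrite add0n ltnNge size_s.
Qed.

End HeisenbergGroup.

Theorem theorem1p1 (d : nat) : 0 < d ->
  exists (gT : finGroupType) (G : {group gT}),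
    [/\ special_pgroup 2 G, cg_connected G & cg_diam_gt G d].
Proof.
move=> _; exists (poly_heis 'F_2 d), [set: poly_heis 'F_2 d]%G; split.
- exact/heis_special/pchar_Fp.
- exact: heis_cg_connected.
- exact: heis_cg_diam_gt.
Qed.
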